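(* Let $S$ be a set of bilabelled graphs such that for every $(K,\mathbf{a},\mathbf{b})\in S$ every vertex of $K$ occurs among the entries of $\mathbf{a}$ or $\mathbf{b}$. Let $\langle \mathbf{P}_{\mathrm{gt}},S\rangle$ denote the graph category generated by $S\cup\{\mathbf{P}_{\mathrm{gt}}\}$. Then $\langle \mathbf{P}_{\mathrm{gt}},S\rangle$ is a group-theoretical graph category. Consequently, $\langle \mathbf{P}_{\mathrm{gt}},S\rangle$ equals the group-theoretical graph category generated by $S$ (the smallest group-theoretical graph category containing $S$).
   Context: Graphs are finite, undirected, without multiple edges, loops allowed, considered up to isomorphism; $N_k$ is the edgeless graph on $k$ vertices. Bilabelled graph: $(K,\mathbf{a},\mathbf{b})$ with $K$ a graph, $\mathbf{a}\in V(K)^k$ (inputs), $\mathbf{b}\in V(K)^l$ (outputs), up to isomorphism of $K$ preserving the tuples. Operations: tensor product $(K,\mathbf{a},\mathbf{b})\otimes(H,\mathbf{c},\mathbf{d})=(K\sqcup H,\mathbf{a}\mathbf{c},\mathbf{b}\mathbf{d})$; composition (for $|\mathbf{b}|=|\mathbf{c}|$) $(H,\mathbf{c},\mathbf{d})\cdot(K,\mathbf{a},\mathbf{b})=(H\cdot K,\mathbf{a},\mathbf{d})$ where $H\cdot K$ is obtained from $K\sqcup H$ by identifying $b_i$ with $c_i$ for all $i$ (ignoring edge multiplicities); involution $(K,\mathbf{a},\mathbf{b})^*=(K,\mathbf{b},\mathbf{a})$. For a partition $\pi$ of $V(K)$, $K/\pi$ has the blocks as vertices with an edge between two (possibly equal)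 blocks iff $K$ has an edge between some of their elements, $q_\pi$ the quotient map, and $(K,\mathbf{a},\mathbf{b})/\pi:=(K/\pi,q_\pi(\mathbf{a}),q_\pi(\mathbf{b}))$. Let $\mathbf{0}=(N_0,\emptyset,\emptyset)$ and $\mathbf{M}^{k,l}=(M,(v,\dots,v),(v,\dots,v))$ for the one-vertex loopless graph $M$ with vertex $v$ ($k$ inputs, $l$ outputs). A graph category is a set of bilabelled graphs containing $\mathbf{M}^{1,1},\mathbf{M}^{0,2},\mathbf{0}$ and closed under tensor products, compositions and involution; it is group-theoretical if it is also closed under all quotients $\mathbf{K}\mapsto\mathbf{K}/\pi$. $\mathbf{P}_{\mathrm{gt}}$ denotes the bilabelled graph $(N_2,(x,y,y),(y,y,x))$, where $N_2$ has the two vertices $x,y$ and no edges. *)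

From mathcomp Require Import all_boot all_order.
Set Implicit Arguments. Unset Strict Implicit. Unset Printing Implicit Defensive.

(* A bilabelled graph (K, a, b): finite vertex type, adjacency relation
   (interpreted symmetrically, loops allowed, via [bedge]), inputs, outputs. *)
Record bgraph := BG {
  bV : finType;
  badj : rel bV;
  binp : seq bV;
  bout : seq bV }.

Definition bedge (K : bgraph) : rel (bV K) := fun x y => badj x y || badj y x.

Definition bg_iso (G H : bgraph) : Prop :=
  exists f : bV G -> bV H,
    [/\ bijective f,
        (forall x y, bedge (f x) (f y) = bedge x y),
        map f (binp G) = binp H &
        map f (bout G) = bout H].

(* Sets of bilabelled graphs are sets of isomorphism classes, i.e.
   isomorphism-closed predicates on representatives. *)
Definition iso_closed (C : bgraph -> Prop) : Prop :=
  forall G H, bg_iso G H -> C G -> C H.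

Definition btensor (K H : bgraph) : bgraph :=
  @BG (bV K + bV H)%type
    (fun u v => match u, v with
                | inl a, inl b => badj a b
                | inr a, inr b => badj a b
                | _, _ => false end)
    (map inl (binp K) ++ map inr (binp H))
    (map inl (bout K) ++ map inr (bout H)).

Definition binv (K : bgraph) : bgraph := @BG (bV K) (@badj K) (bout K) (binp K).

(* Vertices are the blocks; two (possibly equal) blocks are adjacent iff K has
   an edge between some of their elements; labels are mapped by x |-> block of x. *)
Definition qV (T : finType) (P : {set {set T}}) : finType :=
  {B : {set T} | B \in P}.

Definition qmap (T : finType) (P : {set {set T}}) (x : T) : option (qV P) :=
  insub (pblock P x).

Definition bquot (K : bgraph) (P : {set {set bV K}}) : bgraph :=
  @BG (qV P)
    (fun B C => [exists x in val B, exists y in val C, bedge x y])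
    (pmap (@qmap _ P) (binp K))
    (pmap (@qmap _ P) (bout K)).

(* Composition H . K (requires size (bout K) = size (binp H)): identify the
   i-th output of K with the i-th input of H in the disjoint union K + H. *)
Definition bunion_io (K H : bgraph) : bgraph :=
  @BG (bV K + bV H)%type (@badj (btensor K H))
    (map inl (binp K)) (map inr (bout H)).

Definition glue_rel (K H : bgraph) : rel (bV K + bV H)%type :=
  fun u v => ((u, v) \in zip (map inl (bout K)) (map inr (binp H)))
          || ((v, u) \in zip (map inl (bout K)) (map inr (binp H))).

Definition bcomp (H K : bgraph) : bgraph :=
  @bquot (bunion_io K H)
    (equivalence_partition (connect (@glue_rel K H)) [set: (bV K + bV H)%type]).

Definition bM (k l : nat) : bgraph :=
  @BG unit (fun _ _ => false) (nseq k tt) (nseq l tt).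

Definition bzero : bgraph := @BG void (fun _ _ => false) [::] [::].

(* P_gt = (N_2, (x,y,y), (y,y,x)) with x = false, y = true. *)
Definition bPgt : bgraph :=
  @BG bool (fun _ _ => false) [:: false; true; true] [:: true; true; false].

Definition graph_category (C : bgraph -> Prop) : Prop :=
  [/\ iso_closed C,
      [/\ C (bM 1 1), C (bM 0 2) & C bzero],
      (forall K H, C K -> C H -> C (btensor K H)),
      (forall H K, C H -> C K -> size (bout K) = size (binp H) -> C (bcomp H K)) &
      (forall K, C K -> C (binv K))].

Definition group_theoretical (C : bgraph -> Prop) : Prop :=
  graph_category C /\
  forall (K : bgraph) (P : {set {set bV K}}),
    C K -> partition P [set: bV K] -> C (bquot P).

Definition gen_cat (S : bgraph -> Prop) : bgraph -> Prop :=
  fun G => forall C, graph_category C -> (forall H, S H -> C H) -> C G.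

Definition gen_gt_cat (S : bgraph -> Prop) : bgraph -> Prop :=
  fun G => forall C, group_theoretical C -> (forall H, S H -> C H) -> C G.

From Stdlib Require Import Setoid.
From mathcomp Require Import all_boot fingraph.
Set Implicit Arguments. Unset Strict Implicit. Unset Printing Implicit Defensive.

(* Call G pair-closed in C if G stays in C after appending to its outputs,
   for any list d of vertices, every entry of d twice.  Composing with P_gt
   turns outputs (s, t, t) into (t, t, s), so a repeated pair commutes with
   every other output; with M^{1,3} and M^{0,4}, both obtained from P_gt, a
   pair can moreover be created at any labelled vertex and moved between
   inputs and outputs.  Hence graphs all of whose vertices are labelled are
   pair-closed, and pair-closedness survives isomorphism, tensor product,
   composition and involution, so every member of <P_gt, S> is pair-closed.
   A pair-closed G has all its quotients in the category: append x, x, r x,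
   r x to the outputs for every vertex x, where r x represents the block of
   x, and compose with copies of M^{4,0}, which glue each x to r x.
   Conversely, every group-theoretical category contains P_gt, which is a
   quotient of M^{0,2} (x) M^{1,1} (x) M^{2,0}. *)

Lemma zip_map2 (A B A' B' : Type) (f : A -> A') (g : B -> B') s t :
  zip (map f s) (map g t) = map (fun p => (f p.1, g p.2)) (zip s t).
Proof. by elim: s t => [|x s IH] [|y t] //=; rewrite IH. Qed.

Lemma mem_zip_map (A B A' B' : eqType) (f : A -> A') (g : B -> B') s t x y :
  (x, y) \in zip s t -> (f x, g y) \in zip (map f s) (map g t).
Proof. by rewrite zip_map2; apply: (map_f (fun p => (f p.1, g p.2))). Qed.

Lemma mem_zip_map_eq (A B : eqType) (f : A -> B) (s t : seq A) a b :
  map f s = map f t -> (a, b) \in zip s t -> f a = f b.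
Proof.
elim: s t => [|x s IH] [|y t] //= [e1 e2]; rewrite in_cons => /orP[/eqP[-> ->] //|].
exact: IH.
Qed.

Lemma zip_partner (A B : eqType) (s : seq A) (t : seq B) y :
  size s = size t -> y \in t -> exists x, (x, y) \in zip s t.
Proof.
elim: s t => [|x s IH] [|y' t] //= [e]; rewrite in_cons => /orP[/eqP->|yt].
  by exists x; rewrite mem_head.
by have [x' xy] := IH _ e yt; exists x'; rewrite in_cons xy orbT.
Qed.

Lemma mem_zip_flatten (I A B : eqType) (F : I -> seq A) (G : I -> seq B) s i a b :
  (forall i, size (F i) = size (G i)) -> i \in s -> (a, b) \in zip (F i) (G i) ->
  (a, b) \in zip (flatten (map F s)) (flatten (map G s)).
Proof.
move=> szFG + ab; elim: s => //= j s IH; rewrite in_cons zip_cat // mem_cat.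
by case/orP=> [/eqP<-|/IH->]; rewrite ?ab ?orbT.
Qed.

Lemma map_const_nseq (A B : Type) (b : B) (s : seq A) : map (fun=> b) s = nseq (size s) b.
Proof. by elim: s => //= x s ->. Qed.

Lemma map_flatten_nseq (A B : Type) (h : A -> B) k s :
  map h (flatten [seq nseq k i | i <- s]) = flatten [seq nseq k i | i <- map h s].
Proof. by elim: s => //= x s IH; rewrite map_cat map_nseq IH. Qed.

Lemma size_map_enum_ord (T : Type) n (f : 'I_n -> T) : size (map f (enum 'I_n)) = n.
Proof. by rewrite size_map size_enum_ord. Qed.

Lemma map_tnth_enum_comp (T R : Type) (F : T -> R) (s : seq T) :
  map (F \o tnth (in_tuple s)) (enum 'I_(size s)) = map F s.
Proof. by rewrite map_comp map_tnth_enum. Qed.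

Lemma mem_zip_enum_tnth (T : eqType) (s : seq T) (i : 'I_(size s)) :
  (i, tnth (in_tuple s) i) \in zip (enum 'I_(size s)) s.
Proof.
have := zip_map id (tnth (in_tuple s)) (enum 'I_(size s)).
rewrite map_id map_tnth_enum => ->.
exact: (map_f (fun j => (j, tnth (in_tuple s) j)) (mem_enum _ i)).
Qed.

Definition doubled (T : Type) (s : seq T) : seq T := flatten [seq [:: x; x] | x <- s].

Lemma doubled_cat (T : Type) (s t : seq T) : doubled (s ++ t) = doubled s ++ doubled t.
Proof. by rewrite /doubled map_cat flatten_cat. Qed.

Lemma map_doubled (A B : Type) (f : A -> B) s : map f (doubled s) = doubled (map f s).
Proof. by elim: s => //= x s ->. Qed.

Lemma perm_sum_split (A B : eqType) (s : seq (A + B)) :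
  exists g h, perm_eq (map inl g ++ map inr h) s.
Proof.
elim: s => [|[x|y] s [g [h gh]]]; first by exists [::], [::].
  by exists (x :: g), h; rewrite perm_cons.
exists g, (y :: h); rewrite -(perm_cons (inr y)) in gh; apply: perm_trans gh.
by rewrite /= -cat1s perm_catCA.
Qed.

(** * Recognising quotients and compositions *)

Lemma bedgeC (K : bgraph) : symmetric (@bedge K).
Proof. by move=> x y; rewrite /bedge orbC. Qed.

Lemma glue_relC (K H : bgraph) : symmetric (@glue_rel K H).
Proof. by move=> u v; rewrite /glue_rel orbC. Qed.

Lemma glueP (K H : bgraph) x y :
  (x, y) \in zip (bout K) (binp H) -> @glue_rel K H (inl x) (inr y).
Proof. by move=> xy; rewrite /glue_rel (mem_zip_map inl inr xy). Qed.

Lemma mem_btensor_inp (K H : bgraph) u : (u \in binp (btensor K H)) =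
  match u with inl x => x \in binp K | inr y => y \in binp H end.
Proof.
rewrite mem_cat; case: u => [x|y].
  by rewrite (mem_map (@inl_inj _ _)); case: mapP => [[]|]; rewrite ?orbF.
by rewrite (mem_map (@inr_inj _ _)); case: mapP => [[]|].
Qed.

Definition bg_image (G Z : bgraph) (f : bV G -> bV Z) : Prop :=
  [/\ forall z, exists x, f x = z,
      forall z1 z2, bedge z1 z2 = [exists x, exists y, [&& f x == z1, f y == z2 & bedge x y]],
      map f (binp G) = binp Z &
      map f (bout G) = bout Z].

Lemma bg_image_iso (G Z W : bgraph) (f : bV G -> bV Z) (g : bV G -> bV W) :
  bg_image f -> bg_image g -> (forall x y, (f x == f y) = (g x == g y)) -> bg_iso Z W.
Proof.
case=> fsurj fE fI fO [gsurj gE gI gO] fg.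
have [s sK] := fin_all_exists fsurj; have [t tK] := fin_all_exists gsurj.
have gsf x : g (s (f x)) = g x by apply/eqP; rewrite -fg sK.
have fsg x : f (t (g x)) = f x by apply/eqP; rewrite fg tK.
have relabel (l : seq (bV G)) : map (g \o s) (map f l) = map g l.
  by rewrite -map_comp; apply: eq_map => x /=; rewrite gsf.
exists (g \o s); split.
- by exists (f \o t) => [z | w] /=; rewrite ?fsg ?gsf ?sK ?tK.
- move=> z1 z2; rewrite gE fE /=.
  by apply: eq_existsb => x; apply: eq_existsb => y; rewrite -!fg !sK.
- by rewrite -fI relabel.
- by rewrite -fO relabel.
Qed.

Lemma bquot_proj (K : bgraph) (P : {set {set bV K}}) : partition P [set: bV K] ->
  exists q : bV K -> bV (bquot P),
    [/\ forall x, qmap P x = Some (q x), forall x, val (q x) = pblock P x &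
        forall z, exists x, q x = z].
Proof.
case/and3P=> /eqP covP tiP nzP.
have PxP x : pblock P x \in P by rewrite pblock_mem // covP inE.
exists (fun x => Sub (pblock P x) (PxP x)); split=> // [x|z].
  rewrite /qmap; case: insubP => [z _ zE|]; last by rewrite PxP.
  by congr Some; apply: val_inj.
have /set0Pn[x xz] : val z != set0 by apply: contraNneq nzP => <-; exact: valP.
by exists x; apply: val_inj; rewrite /= (def_pblock tiP (valP z) xz).
Qed.

Lemma bquot_image (K : bgraph) (P : {set {set bV K}}) : partition P [set: bV K] ->
  exists2 q : bV K -> bV (bquot P), bg_image q & forall x y, (q x == q y) = (y \in pblock P x).
Proof.
move=> partP; have [q [qE qval qsurj]] := bquot_proj partP.
have qker x y : (q x == q y) = (y \in pblock P x).
  rewrite -val_eqE !qval eq_pblock //; first by case/and3P: partP.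
  by case/and3P: partP => /eqP-> _ _; rewrite inE.
have inq x (z : qV P) : (x \in val z) = (q x == z).
  by have [y <-] := qsurj z; rewrite qval -qker eq_sym.
have adjE (z z' : qV P) : [exists x in val z, exists y in val z', bedge x y]
    = [exists x, exists y, [&& q x == z, q y == z' & bedge x y]].
  apply/existsP/existsP => [[x /andP[xz /existsP[y /andP[yz' exy]]]]
                            |[x /existsP[y /and3P[xz yz' exy]]]].
    by exists x; apply/existsP; exists y; rewrite -!inq xz yz'.
  by exists x; rewrite inq xz; apply/existsP; exists y; rewrite inq yz'.
have qmE l : pmap (qmap P) l = map q l by elim: l => //= x l ->; rewrite qE.
exists q => //; split; rewrite /= ?qmE //.
move=> z1 z2; rewrite /bedge /= !adjE; apply/orb_idr.
move=> /existsP[x /existsP[y /and3P[xz yz exy]]].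
by apply/existsP; exists y; apply/existsP; exists x; rewrite xz yz bedgeC.
Qed.

Lemma glue_equivalence (K H : bgraph) :
  {in [set: bV K + bV H] & &, equivalence_rel (connect (@glue_rel K H))}.
Proof.
move=> u v w _ _ _; split=> [|uv]; first exact: connect0.
by apply: same_connect => //; apply: sym_connect_sym; exact: glue_relC.
Qed.

(* [c] picks, for each vertex of [Z], a preimage to which every vertex with
   the same image is glued; inputs of [H] need no separate check, being glued
   to outputs of [K]. *)
Lemma bcomp_iso (H K Z : bgraph) (f : bV K + bV H -> bV Z) (c : bV Z -> bV K + bV H) :
  size (bout K) = size (binp H) -> cancel c f ->
  map (f \o inl) (bout K) = map (f \o inr) (binp H) ->
  (forall x, connect (@glue_rel K H) (inl x) (c (f (inl x)))) ->
  (forall y, y \notin binp H -> connect (@glue_rel K H) (inr y) (c (f (inr y)))) ->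
  (forall z1 z2, bedge z1 z2 =
     [exists u, exists v, [&& f u == z1, f v == z2 & @bedge (bunion_io K H) u v]]) ->
  map (f \o inl) (binp K) = binp Z -> map (f \o inr) (bout H) = bout Z ->
  bg_iso (bcomp H K) Z.
Proof.
move=> sz cK fglue connK connH fE fI fO.
have glue_f u v : glue_rel u v -> f u = f v.
  have fglue' : map f (map inl (bout K)) = map f (map inr (binp H)) by rewrite -!map_comp.
  by case/orP=> /(mem_zip_map_eq fglue') // ->.
have conn u : connect (@glue_rel K H) u (c (f u)).
  case: u => [x|y]; first exact: connK.
  have [yH|] := boolP (y \in binp H); last exact: connH.
  have [x xy] := zip_partner sz yH.
  rewrite -(glue_f _ _ (glueP xy)); apply: connect_trans (connK x).
  by apply: connect1; rewrite glue_relC glueP.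
have connE u v : connect (@glue_rel K H) u v = (f u == f v).
  apply/idP/eqP => [/connectP[p + ->] | fuv].
    by elim: p u => //= w p IH u /andP[/glue_f -> /IH].
  by apply: connect_trans (conn u) _; rewrite fuv sym_connect_sym //; exact: glue_relC.
have geq := @glue_equivalence K H.
have [q qim qker] := @bquot_image (bunion_io K H) _ (equivalence_partitionP geq).
apply: (bg_image_iso qim).
  by split; rewrite -?map_comp //; move=> z; exists (c z).
by move=> u v; rewrite qker (pblock_equivalence_partition geq) ?inE ?connE.
Qed.

Lemma bunion_edge_l (K H : bgraph) (Z : finType) (f : bV K + bV H -> Z) z1 z2 :
  (forall y y' : bV H, badj y y' = false) ->
  [exists u, exists v, [&& f u == z1, f v == z2 & @bedge (bunion_io K H) u v]] =
  [exists x, exists y, [&& f (inl x) == z1, f (inl y) == z2 & bedge x y]].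
Proof.
move=> H0; apply/existsP/existsP => [[u /existsP[v]]|[x /existsP[y exy]]].
  by case: u v => [x|y] [x'|y']; rewrite /bedge /= ?H0 ?andbF // => exy;
    exists x; apply/existsP; exists x'.
by exists (inl x); apply/existsP; exists (inl y).
Qed.

Lemma bunion_edge_r (K H : bgraph) (Z : finType) (f : bV K + bV H -> Z) z1 z2 :
  (forall x x' : bV K, badj x x' = false) ->
  [exists u, exists v, [&& f u == z1, f v == z2 & @bedge (bunion_io K H) u v]] =
  [exists x, exists y, [&& f (inr x) == z1, f (inr y) == z2 & bedge x y]].
Proof.
move=> K0; apply/existsP/existsP => [[u /existsP[v]]|[x /existsP[y exy]]].
  by case: u v => [x|y] [x'|y']; rewrite /bedge /= ?K0 ?andbF // => exy;
    exists y; apply/existsP; exists y'.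
by exists (inr x); apply/existsP; exists (inr y).
Qed.

Lemma bcomp_relabel_out (G X : bgraph) (g : bV X -> bV G) :
  (forall w w' : bV X, badj w w' = false) -> (forall w, w \in binp X) ->
  map g (binp X) = bout G ->
  bg_iso (bcomp X G) (BG (@badj G) (binp G) (map g (bout X))).
Proof.
move=> X0 Xinp gX.
pose f (u : bV G + bV X) : bV G := match u with inl x => x | inr w => g w end.
apply: (@bcomp_iso X G (BG (@badj G) (binp G) (map g (bout X))) f inl) => //=.
- by rewrite -gX size_map.
- by rewrite -gX -map_comp; apply: eq_map.
- by move=> w; rewrite Xinp.
- move=> z1 z2; rewrite bunion_edge_l //=.
  apply/idP/existsP => [ez|[x /existsP[y /and3P[/eqP<- /eqP<- //]]]].
  by exists z1; apply/existsP; exists z2; rewrite !eqxx.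
- exact: map_id.
Qed.

Definition norel (T : Type) : rel T := fun _ _ => false.
Arguments norel {T}.

Definition bM_copies (k l n : nat) : bgraph :=
  @BG 'I_n norel (flatten [seq nseq k i | i <- enum 'I_n])
                 (flatten [seq nseq l i | i <- enum 'I_n]).

Definition bid (n : nat) : bgraph := @BG 'I_n norel (enum 'I_n) (enum 'I_n).

Section GraphCategory.

Variable C : bgraph -> Prop.
Hypothesis gcC : graph_category C.

Lemma gcat_iso G H : bg_iso G H -> C G -> C H.
Proof. by case: gcC => + _ _ _ _; apply. Qed.

Lemma gcat_M11 : C (bM 1 1). Proof. by case: gcC => _ []. Qed.
Lemma gcat_M02 : C (bM 0 2). Proof. by case: gcC => _ []. Qed.
Lemma gcat_zero : C bzero. Proof. by case: gcC => _ []. Qed.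

Lemma gcat_tensor K H : C K -> C H -> C (btensor K H).
Proof. by case: gcC => _ _ + _ _; apply. Qed.

Lemma gcat_comp H K : C H -> C K -> size (bout K) = size (binp H) -> C (bcomp H K).
Proof. by case: gcC => _ _ _ + _; apply. Qed.

Lemma gcat_inv (T : finType) (e : rel T) a b : C (BG e a b) -> C (BG e b a).
Proof. by case: gcC => _ _ _ _ /(_ (BG e a b)). Qed.

Lemma gcat_copies k l n : C (bM k l) -> C (bM_copies k l n).
Proof.
move=> CM; elim: n => [|n IH].
  have g : 'I_0 -> void by case=> m; rewrite ltn0.
  apply: gcat_iso gcat_zero; exists (fun v : void => match v with end); split.
  - by exists g; case.
  - by case.
  - by rewrite /= enum_ord0.
  - by rewrite /= enum_ord0.
apply: gcat_iso (gcat_tensor CM IH).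
pose f (u : unit + 'I_n) : 'I_n.+1 := if u is inr i then lift ord0 i else ord0.
pose g (j : 'I_n.+1) : unit + 'I_n := if unlift ord0 j is Some i then inr i else inl tt.
exists f; split.
- exists g; first by case=> [[]|i]; rewrite /f /g ?unlift_none ?liftK.
  by move=> j; rewrite /f /g; case: unliftP => [i ->|->].
- by case=> [[]|i] [[]|j].
- by rewrite /= enum_ordSl /= map_cat -map_comp map_nseq -map_comp map_flatten_nseq.
- by rewrite /= enum_ordSl /= map_cat -map_comp map_nseq -map_comp map_flatten_nseq.
Qed.

Lemma gcat_bid n : C (bid n).
Proof.
by have := gcat_copies n gcat_M11; rewrite /bM_copies /= !flatten_seq1.
Qed.

Lemma gcat_replace_out (T : finType) (e : rel T) (a p u q : seq T)
    (W : finType) (wi wo : seq W) (g : W -> T) :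
  C (BG e a (p ++ u ++ q)) -> C (@BG W norel wi wo) -> (forall w, w \in wi) ->
  map g wi = u -> C (BG e a (p ++ map g wo ++ q)).
Proof.
move=> CG CW Wall gu.
pose X := btensor (btensor (bid (size p)) (BG norel wi wo)) (bid (size q)).
pose h (x : bV X) : T := match x with
  | inl (inl i) => tnth (in_tuple p) i
  | inl (inr w) => g w
  | inr j => tnth (in_tuple q) j end.
have hX l :
    map h (map inl (map inl (enum 'I_(size p)) ++ map inr l) ++ map inr (enum 'I_(size q)))
    = p ++ map g l ++ q.
  rewrite !map_cat -catA; congr (_ ++ (_ ++ _)).
  - by rewrite -2!map_comp; exact: (map_tnth_enum (in_tuple p)).
  - by rewrite -2!map_comp; exact: eq_map.
  - by rewrite -map_comp; exact: (map_tnth_enum (in_tuple q)).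
have sz : size (p ++ u ++ q) = size (binp X).
  by rewrite -gu -(hX wi) size_map.
apply: gcat_iso (gcat_comp (gcat_tensor (gcat_tensor (gcat_bid _) CW) (gcat_bid _)) CG sz).
rewrite -(hX wo).
apply: (@bcomp_relabel_out (BG e a (p ++ u ++ q)) X h).
- by move=> [[i|w]|j] [[i'|w']|j'].
- by move=> [[i|w]|j]; rewrite !mem_btensor_inp /= ?mem_enum.
- by rewrite /= -gu hX.
Qed.

End GraphCategory.

Lemma gen_cat_graph_category (S : bgraph -> Prop) : graph_category (gen_cat S).
Proof.
split.
- by move=> G H iGH CG D gD SD; exact: (gcat_iso gD iGH (CG D gD SD)).
- by split=> D gD _; case: gD => _ [].
- by move=> K H CK CH D gD SD; exact: (gcat_tensor gD (CK D gD SD) (CH D gD SD)).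
- by move=> H K CH CK sz D gD SD; exact: (gcat_comp gD (CH D gD SD) (CK D gD SD) sz).
- by move=> K CK D gD SD; case: (gD) => _ _ _ _ invD; exact: (invD _ (CK D gD SD)).
Qed.

(** * Categories containing P_gt *)

Definition add_out_pairs (G : bgraph) (d : seq (bV G)) : bgraph :=
  @BG (bV G) (@badj G) (binp G) (bout G ++ doubled d).

Definition pair_closed (C : bgraph -> Prop) (G : bgraph) : Prop :=
  forall d, C (@add_out_pairs G d).

Section PgtCategory.

Variable C : bgraph -> Prop.
Hypotheses (gcC : graph_category C) (CP : C bPgt).

Lemma swap_out (T : finType) (e : rel T) a p q s t :
  C (BG e a (p ++ [:: s; t; t] ++ q)) <-> C (BG e a (p ++ [:: t; t; s] ++ q)).
Proof.
pose g b := if b then t else s.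
split=> CG.
  by apply: (gcat_replace_out (g := g) gcC CG CP) => //=; case.
by apply: (gcat_replace_out (g := g) gcC CG (gcat_inv gcC CP)) => //=; case.
Qed.

Lemma pair_shift_out (T : finType) (e : rel T) a t l p q :
  C (BG e a (p ++ [:: t; t] ++ l ++ q)) <-> C (BG e a (p ++ l ++ [:: t; t] ++ q)).
Proof.
elim: l p => // s l IH p.
rewrite (_ : [:: t; t] ++ _ = [:: t; t; s] ++ l ++ q) // -swap_out /=.
by rewrite -!(cat_rcons s p) IH.
Qed.

Lemma doubled_shift_out (T : finType) (e : rel T) a g l p q :
  C (BG e a (p ++ doubled g ++ l ++ q)) <-> C (BG e a (p ++ l ++ doubled g ++ q)).
Proof.
elim: g p => // x g IH p.
by rewrite -[doubled _]/([:: x; x] ++ doubled g) -!catA (catA p) IH -catA pair_shift_out.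
Qed.

Lemma doubled_perm_out (T : finType) (e : rel T) a g h p : perm_eq g h ->
  C (BG e a (p ++ doubled g)) -> C (BG e a (p ++ doubled h)).
Proof.
elim: h g p => [|x h IH] g p pgh; first by rewrite (perm_small_eq _ pgh).
have xg : x \in g by rewrite (perm_mem pgh) mem_head.
move: pgh; case/splitPr: xg => g1 g2 pgh.
rewrite doubled_cat -[doubled (x :: g2)]/([:: x; x] ++ doubled g2) -(cats0 (doubled g2)).
rewrite -pair_shift_out cats0 catA -doubled_cat => /IH CG.
rewrite -[doubled (x :: h)]/([:: x; x] ++ doubled h) catA; apply: CG.
by rewrite -(perm_cons x) (perm_trans _ pgh) // -cat1s perm_catCA.
Qed.

Lemma gcat_M13 : C (bM 1 3).
Proof.
(* P_gt . (M^{0,2} (x) M^{1,1}) glues its three vertices into one. *)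
pose K := btensor (bM 0 2) (bM 1 1).
have CK : C K := gcat_tensor gcC (gcat_M02 gcC) (gcat_M11 gcC).
apply: (gcat_iso gcC) (gcat_comp gcC CP CK erefl).
apply: (@bcomp_iso bPgt K (bM 1 3) (fun _ => tt) (fun _ => inl (inl tt))) => //.
- by case.
- case=> [[]|[]]; first exact: connect0.
  apply: (@connect_trans _ _ (inr true)); apply: connect1.
    by apply: glueP; rewrite !inE.
  by rewrite glue_relC; apply: glueP; rewrite !inE.
- by case.
- move=> z1 z2; rewrite bunion_edge_l; last by case.
  by apply/esym/existsP => -[[[]|[]] /existsP[[[]|[]]]].
Qed.

Lemma gcat_M04 : C (bM 0 4).
Proof.
have := gcat_replace_out (p := [::]) (u := [:: tt]) (q := [:: tt]) (wo := nseq 3 tt) (g := id)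
  gcC (gcat_M02 gcC) gcat_M13.
by apply=> // -[].
Qed.

Lemma bend_pair (T : finType) (e : rel T) A B v :
  C (BG e (A ++ [:: v; v]) B) -> C (BG e A (B ++ [:: v; v])).
Proof.
(* The vertex of M^{0,4} glues v to both vertices of [bid 2], whose outputs
   become the new pair. *)
move=> CG.
pose H := btensor (BG e (A ++ [:: v; v]) B) (bid 2).
pose K := btensor (bid (size A)) (bM 0 4).
have eH : binp H = map inl A ++ [:: inl v; inl v] ++ map inr (enum 'I_2).
  by rewrite /= map_cat -catA.
have eK : bout K = map inl (enum 'I_(size A)) ++ nseq 4 (inr tt) by [].
have szA : size (map (@inl _ unit) (enum 'I_(size A))) = size (map (@inl _ (bV (bid 2))) A).
  by rewrite size_map_enum_ord size_map.
have sz : size (bout K) = size (binp H) by rewrite eH eK !size_cat szA size_map_enum_ord.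
have CH : C H := gcat_tensor gcC CG (gcat_bid gcC 2).
have CK : C K := gcat_tensor gcC (gcat_bid gcC _) gcat_M04.
apply: (gcat_iso gcC) (gcat_comp gcC CH CK sz).
pose f (u : bV K + bV H) : T := match u with
  | inl (inl i) => tnth (in_tuple A) i
  | inr (inl x) => x
  | _ => v end.
apply: (@bcomp_iso H K (BG e A (B ++ [:: v; v])) f (fun x => inr (inl x))) => //.
- rewrite eH eK !map_cat; congr (_ ++ _).
    transitivity A; first by rewrite -map_comp; exact: (map_tnth_enum (in_tuple A)).
    by rewrite -map_comp map_id.
  by rewrite map_nseq /= -map_comp map_const_nseq size_enum_ord.
- case=> [i|[]]; apply/connect1/glueP; rewrite eH eK zip_cat // mem_cat.
    by rewrite (mem_zip_map inl inl (mem_zip_enum_tnth i)).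
  by rewrite /= !inE eqxx orbT.
- case=> [x|j] // /negP[]; rewrite mem_btensor_inp; exact: mem_enum.
- move=> z1 z2; rewrite bunion_edge_r; last by move=> [i|[]] [j|[]].
  apply/idP/existsP => [ez|[[x|i] /existsP[[y|j] /and3P[/eqP<- /eqP<- //]]]].
  by exists (inl z1); apply/existsP; exists (inl z2); rewrite !eqxx.
- have -> : binp K = map inl (enum 'I_(size A)) by rewrite /= cats0.
  by rewrite -map_comp; exact: (map_tnth_enum (in_tuple A)).
- have -> : bout H = map inl B ++ map inr (enum 'I_2) by [].
  by rewrite map_cat -(map_comp _ inl) -(map_comp _ inr) map_id map_const_nseq size_enum_ord.
Qed.

Lemma pair_in_out (T : finType) (e : rel T) A B v :
  C (BG e (A ++ [:: v; v]) B) <-> C (BG e A (B ++ [:: v; v])).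
Proof.
split; first exact: bend_pair.
by move=> CG; apply: (gcat_inv gcC); apply: bend_pair; exact: (gcat_inv gcC).
Qed.

Lemma pairs_in_out (T : finType) (e : rel T) A B d :
  C (BG e (A ++ doubled d) B) <-> C (BG e A (B ++ doubled d)).
Proof.
elim: d A B => [|x d IH] A B; first by rewrite !cats0.
rewrite -[doubled _]/([:: x; x] ++ doubled d) catA IH pair_in_out.
by rewrite -(cats0 (doubled d)) pair_shift_out cats0 catA.
Qed.

Lemma add_pair_out (T : finType) (e : rel T) A B v :
  v \in A ++ B -> C (BG e A B) -> C (BG e A (B ++ [:: v; v])).
Proof.
have outs A' B' : v \in B' -> C (BG e A' B') -> C (BG e A' (B' ++ [:: v; v])).
  case/splitPr=> B1 B2 CG.
  have CG3 : C (BG e A' (B1 ++ [:: v; v; v] ++ B2)).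
    by apply: (gcat_replace_out (u := [:: v]) (wo := nseq 3 tt) (g := fun=> v) gcC CG
      gcat_M13) => // -[].
  have -> : (B1 ++ v :: B2) ++ [:: v; v] = rcons B1 v ++ B2 ++ [:: v; v] ++ [::].
    by rewrite cats0 cat_rcons -catA.
  by apply/pair_shift_out; rewrite cats0 cat_rcons.
rewrite mem_cat => /orP[vA CG|]; last exact: outs.
by apply/pair_in_out; apply: (gcat_inv gcC); apply: outs vA _; exact: (gcat_inv gcC).
Qed.

Lemma add_pairs_out (T : finType) (e : rel T) A B d :
  {subset d <= A ++ B} -> C (BG e A B) -> C (BG e A (B ++ doubled d)).
Proof.
elim/last_ind: d => [|d v IH] sub CG; first by rewrite cats0.
have [vAB dAB] : v \in A ++ B /\ {subset d <= A ++ B}.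
  by split=> [|x xd]; apply: sub; rewrite mem_rcons in_cons ?eqxx ?xd ?orbT.
rewrite -cats1 doubled_cat catA; apply: add_pair_out; last exact: IH.
by rewrite catA mem_cat vAB.
Qed.

Lemma pair_closed_labelled G :
  (forall v, (v \in binp G) || (v \in bout G)) -> C G -> pair_closed C G.
Proof.
case: G => T e A B /= lab CG d; apply: add_pairs_out => // v _.
by rewrite mem_cat lab.
Qed.

Lemma pair_closed_iso G H : bg_iso G H -> pair_closed C G -> pair_closed C H.
Proof.
case=> f [[g fK gK] fE fI fO] pcG d; apply: (gcat_iso gcC) (pcG (map g d)).
exists f; split=> //; first by exists g.
by rewrite /= map_cat fO map_doubled -map_comp (eq_map gK) map_id.
Qed.

Lemma pair_closed_inv G : pair_closed C G -> pair_closed C (binv G).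
Proof. by case: G => T e A B pcG d; apply: (gcat_inv gcC); apply/pairs_in_out; exact: pcG. Qed.

Lemma pair_closed_tensor G H :
  pair_closed C G -> pair_closed C H -> pair_closed C (btensor G H).
Proof.
move=> pcG pcH d; have [g [h ghd]] := perm_sum_split d.
have := gcat_tensor gcC (pcG g) (pcH h).
rewrite /btensor /add_out_pairs /= !map_cat !map_doubled -!catA.
rewrite doubled_shift_out catA -doubled_cat.
by move=> CX; rewrite catA; exact: (doubled_perm_out ghd CX).
Qed.

Lemma pair_closed_comp G H : size (bout G) = size (binp H) ->
  pair_closed C G -> pair_closed C H -> pair_closed C (bcomp H G).
Proof.
(* Pairs on vertices of H go to the outputs of H, pairs on vertices of G to
   the inputs of G, which are also the inputs of the composite. *)
move=> sz pcG pcH d.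
have partP := equivalence_partitionP (@glue_equivalence G H).
have [q [qE _ qsurj]] := bquot_proj (K := bunion_io G H) partP.
have qmE l : pmap (qmap _) l = map q l by elim: l => //= u l ->; rewrite qE.
have [rep repK] := fin_all_exists qsurj.
have [g [h ghd]] := perm_sum_split (map rep d).
have CG : C (BG (@badj G) (binp G ++ doubled g) (bout G)).
  by apply/pairs_in_out; exact: pcG.
have := gcat_comp gcC (pcH h) CG sz.
rewrite /bcomp /bquot /= !map_cat !map_doubled !pmap_cat !qmE !map_doubled.
rewrite pairs_in_out -catA -doubled_cat.
have dE : d = map q (map rep d) by rewrite -map_comp (eq_map repK) map_id.
have pd : perm_eq (map q (map inr h) ++ map q (map inl g)) d.
  by rewrite -map_cat dE; apply: perm_map; rewrite perm_catC.
move=> CX; have := doubled_perm_out pd CX.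
by rewrite /add_out_pairs /bcomp /bquot /=; apply.
Qed.

Lemma pair_closed_quot G (P : {set {set bV G}}) :
  partition P [set: bV G] -> pair_closed C G -> C (bquot P).
Proof.
case: G P => T e A B /= P partP pcG.
have [q [qsurj qE qI qO] _] := @bquot_image (BG e A B) P partP.
have [s sK] := fin_all_exists qsurj.
pose quad (i : 'I_#|T|) := [:: enum_val i; enum_val i; s (q (enum_val i)); s (q (enum_val i))].
pose d := flatten [seq [:: enum_val i; s (q (enum_val i))] | i <- enum 'I_#|T|].
have ddE : doubled d = flatten (map quad (enum 'I_#|T|)).
  by rewrite /d; elim: (enum _) => //= i l <-.
pose X := btensor (bid (size B)) (bM_copies 4 0 #|T|).
have CX : C X.
  by apply: (gcat_tensor gcC) (gcat_bid gcC _) (gcat_copies gcC _ (gcat_inv gcC gcat_M04)).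
have eX : binp X = map inl (enum 'I_(size B)) ++
                   flatten (map (fun i => map inr (nseq 4 i)) (enum 'I_#|T|)).
  by rewrite /= map_flatten -map_comp.
have szquad i : size (quad i) = size (map (@inr 'I_(size B) _) (nseq 4 i)) by rewrite size_map.
have sz : size (B ++ doubled d) = size (binp X).
  rewrite eX ddE !size_cat size_map_enum_ord !size_flatten /shape -!map_comp.
  by congr (_ + sumn _); apply: eq_map => i /=; rewrite szquad.
apply: (gcat_iso gcC) (gcat_comp gcC CX (pcG d) sz).
pose f (u : T + bV X) : qV P := match u with
  | inl x => q x
  | inr (inl j) => q (tnth (in_tuple B) j)
  | inr (inr i) => q (enum_val i) end.
apply: (@bcomp_iso X (@add_out_pairs (BG e A B) d) (@bquot (BG e A B) P) f (inl \o s)) => //.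
- rewrite eX /= ddE !map_cat; congr (_ ++ _).
    by rewrite -map_comp; exact/esym/(map_tnth_enum_comp q).
  rewrite !map_flatten -!map_comp; congr flatten; apply: eq_map => i /=.
  by rewrite sK.
- move=> x; pose i := enum_rank x; pose v : bV X := inr i.
  have quadx y : y \in quad i -> @glue_rel (@add_out_pairs (BG e A B) d) X (inl y) (inr v).
    move=> yi; apply: glueP; rewrite [bout _]/= eX ddE zip_cat ?mem_cat; last first.
      by rewrite size_map_enum_ord.
    apply/orP; right; apply: mem_zip_flatten szquad (mem_enum _ i) _.
    by move: yi; rewrite /quad /= !inE => /or4P[]/eqP->; rewrite ?eqxx ?orbT.
  have /quadx gx : x \in quad i by rewrite /quad /i enum_rankK mem_head.
  have /quadx gr : s (q x) \in quad i by rewrite /quad /i enum_rankK !inE eqxx !orbT.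
  by apply: connect_trans (connect1 gx) _; rewrite glue_relC in gr; exact: connect1 gr.
- move=> [j|i] /negP[]; rewrite mem_btensor_inp; first exact: mem_enum.
  by rewrite [binp _]/=; apply/flatten_mapP; exists i; rewrite ?mem_enum ?mem_head.
- move=> z1 z2; rewrite bunion_edge_l; last by move=> [j|i] [j'|i'].
  exact: qE.
- have -> : bout X = map inl (enum 'I_(size B)).
    by rewrite /= (_ : flatten _ = [::]) ?cats0 //; elim: (enum _).
  by rewrite -map_comp -qO; exact: map_tnth_enum_comp.
Qed.

Lemma pair_closed_graph_category : graph_category (pair_closed C).
Proof.
split.
- by move=> G H; exact: pair_closed_iso.
- split; (apply: pair_closed_labelled; first by case).
  + exact: gcat_M11.
  + exact: gcat_M02.
  + exact: gcat_zero.
- exact: pair_closed_tensor.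
- by move=> H G pcH pcG sz; exact: pair_closed_comp.
- exact: pair_closed_inv.
Qed.

End PgtCategory.

Lemma group_theoretical_Pgt D : group_theoretical D -> D bPgt.
Proof.
case=> gD quotD.
pose T0 := btensor (btensor (bM 0 2) (bM 1 1)) (bM 2 0).
have DT0 : D T0.
  apply: (gcat_tensor gD); last exact: (gcat_inv gD (gcat_M02 gD)).
  exact: (gcat_tensor gD (gcat_M02 gD) (gcat_M11 gD)).
pose f (v : bV T0) : bool := if v is inl (inr _) then false else true.
have partP := preim_partitionP f [set: bV T0].
apply: (gcat_iso gD) (quotD _ _ DT0 partP).
have [q qim qker] := @bquot_image T0 _ partP.
apply: (@bg_image_iso T0 _ bPgt q f qim) => [|x y].
  split=> //; first by case; [exists (inr tt) | exists (inl (inr tt))].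
  move=> z1 z2; apply/esym/existsP => -[x /existsP[y /and3P[_ _]]].
  by case: x => [[[]|[]]|[]]; case: y => [[[]|[]]|[]].
by rewrite qker pblock_equivalence_partition ?inE // => a b c _ _ _; split=> // /eqP->.
Qed.

Theorem proposition2p32 (S : bgraph -> Prop) :
  (forall K, S K -> forall v : bV K, (v \in binp K) || (v \in bout K)) ->
  group_theoretical (gen_cat (fun G => G = bPgt \/ S G)) /\
  (forall G, gen_cat (fun G => G = bPgt \/ S G) G <-> gen_gt_cat S G).
Proof.
move=> Slab; set C := gen_cat _.
have gcC : graph_category C := gen_cat_graph_category _.
have CP : C bPgt by move=> D _ gens; apply: gens; left.
have pcC G : C G -> pair_closed C G.
  apply; first exact: pair_closed_graph_category gcC CP.
  move=> H [->|SH]; apply: pair_closed_labelled => //; first by case.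
    exact: Slab.
  by move=> D _ gens; apply: gens; right.
have gtC : group_theoretical C.
  by split=> // K P CK partP; exact: pair_closed_quot (pcC K CK).
split=> // G; split=> [CG D gtD SD | gtG].
- by apply: CG; [case: gtD | move=> H [->|/SD //]; exact: group_theoretical_Pgt].
- by apply: gtG => // H SH D _ gens; apply: gens; right.
Qed.
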